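(* Let $X$ be a finite set and $k$ an integer with $k\ge 5$ and $|X|-k\ge 7$. Let $\mathcal{F}$ be a clone on $X$ such that either $g^*\in\mathcal{F}$, where $g^*(x_1,x_2,x_3)=x_2$ if $x_2=x_3$ and $g^*(x_1,x_2,x_3)=x_1$ otherwise, or (weaker) for every one-to-one $\bar a^*\in X^3$ there is $g_{\bar a^*}\in\mathcal{F}$ with $g_{\bar a^*}(\bar a^* )=a^*_1$ and $g_{\bar a^*}(\bar a)=g^*(\bar a)$ for every $\bar a\in X^3$ with a repetition. Let $\mathfrak{C}$ be a nonempty symmetric family of choice functions for $\binom{X}{k}$ closed under every $f\in\mathcal{F}$. Then $\mathfrak{C}$ is full.
   Context: A clone on $X$: set of finitary operations on $X$ containing all projections and closed under composition. $\binom{X}{k}=\{Y\subseteq X:|Y|=k\}$; a choice function $c$ satisfies $c(Y)\in Y$. Symmetric: for every permutation $\pi$ of $X$ and $c\in\mathfrak{C}$, $(\pi*c)(Y)=\pi^{-1}(c(\pi(Y)))$ is in $\mathfrak{C}$. Closed under $f$ ($n$-place): for $c_1,\dots,c_n\in\mathfrak{C}$, $Y\mapsto f(c_1(Y),\dots,c_n(Y))$ is in $\mathfrak{C}$. Full: every choice function for $\binom{X}{k}$ is in $\mathfrak{C}$. *)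

From mathcomp Require Import all_boot all_fingroup.
Set Implicit Arguments. Unset Strict Implicit. Unset Printing Implicit Defensive.

Definition op (X : finType) (n : nat) := {ffun 'I_n -> X} -> X.

(* A clone: a family of sets of finitary operations, containing all projections,
   closed under composition, and (since it is a *set* of functions) closed under
   extensional equality. *)
Definition is_clone (X : finType) (F : forall n, op X n -> Prop) : Prop :=
  [/\ (forall n f g, F n f -> (forall a, f a = g a) -> F n g),
      (forall n (i : 'I_n), F n (fun a => a i)) &
      (forall n m (f : op X n) (gs : 'I_n -> op X m),
          F n f -> (forall i, F m (gs i)) ->
          F m (fun a => f [ffun i => gs i a]))].

Definition kset (X : finType) (k : nat) := {Y : {set X} | #|Y| == k}.

Definition choice_fun (X : finType) (k : nat) (c : {ffun kset X k -> X}) : Prop :=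
  forall Y : kset X k, c Y \in val Y.

Lemma kset_perm_card (X : finType) (k : nat) (p : {perm X}) (Y : kset X k) :
  #|p @: val Y| == k.
Proof. rewrite card_imset; [exact: (valP Y) | exact: perm_inj]. Qed.

Definition kset_perm (X : finType) (k : nat) (p : {perm X}) (Y : kset X k) : kset X k :=
  exist _ (p @: val Y) (kset_perm_card p Y).

Definition perm_act (X : finType) (k : nat) (p : {perm X}) (c : {ffun kset X k -> X})
  : {ffun kset X k -> X} := [ffun Y => (p^-1)%g (c (kset_perm p Y))].

Definition symmetric_family (X : finType) (k : nat) (C : {ffun kset X k -> X} -> Prop) :=
  forall (p : {perm X}) c, C c -> C (perm_act p c).

Definition closed_under (X : finType) (k n : nat) (C : {ffun kset X k -> X} -> Prop)
  (f : op X n) : Prop :=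
  forall cs : 'I_n -> {ffun kset X k -> X}, (forall i, C (cs i)) ->
    C [ffun Y => f [ffun i => cs i Y]].

Definition full (X : finType) (k : nat) (C : {ffun kset X k -> X} -> Prop) :=
  forall c, choice_fun c -> C c.

Definition tup3 (X : finType) (x1 x2 x3 : X) : {ffun 'I_3 -> X} :=
  [ffun i : 'I_3 => match val i with 0 => x1 | 1 => x2 | _ => x3 end].

Definition gstar (X : finType) : op X 3 :=
  fun a => if a (inord 1) == a (inord 2) then a (inord 1) else a (inord 0).

From mathcomp Require Import all_boot all_fingroup.
From mathcomp Require Import zify.
Set Implicit Arguments. Unset Strict Implicit. Unset Printing Implicit Defensive.

(* Call a pair of values (y1, y2) realizable at the k-sets (Z1, Z2) if some
   member of C takes the value y1 at Z1 and y2 at Z2.  On non-injective triples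
   g* is a majority operation, so by the Baker-Pixley argument a choice function
   belongs to C as soon as all its pairs of values are realizable.  Since C is
   symmetric, realizability of (y1, y2) depends only on |Z1 :&: Z2| and on which
   of y1, y2 lie in Z1 :&: Z2, which leaves five types of pairs.  Applying g* to
   three realizable pairs whose first (or second) coordinates agree in two places
   yields pairs of other types, and the values of a single member of C at
   well-chosen k-sets provide the starting pairs; a case analysis on
   |Z1 :&: Z2| then shows that all five types are realizable.  Each application
   of g* needs it to be exact at one injective triple only, which is why the
   weaker hypothesis on the operations g_a suffices. *)

(** * The operation g* on triples *)

Definition gstar3 (X : eqType) (x y z : X) := if y == z then y else x.

Lemma gstar3_maj (X : eqType) (v x : X) :
  [/\ gstar3 v v x = v, gstar3 v x v = v & gstar3 x v v = v].
Proof. by rewrite /gstar3 eqxx; split => //; case: eqP. Qed.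

Lemma gstar3_majority (X : eqType) (x y z v : X) :
  1 < (x == v) + (y == v) + (z == v) -> ~~ uniq [:: x; y; z] /\ gstar3 x y z = v.
Proof.
case: (x =P v) (y =P v) (z =P v) => [->|_] [->|_] [->|_] //= _;
  by split; rewrite ?inE ?eqxx ?orbT ?andbF //= /gstar3 ?eqxx //; case: eqP => [->|_].
Qed.

Lemma tup3E (X : finType) (x y z : X) :
  [/\ tup3 x y z (inord 0) = x, tup3 x y z (inord 1) = y & tup3 x y z (inord 2) = z].
Proof. by rewrite !ffunE /= !inordK. Qed.

Lemma tup3_eta (X : finType) (a : {ffun 'I_3 -> X}) :
  a = tup3 (a (inord 0)) (a (inord 1)) (a (inord 2)).
Proof.
apply/ffunP => -[[|[|[|//]]] i]; rewrite ffunE; congr (a _).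
all: by apply: val_inj; rewrite /= inordK.
Qed.

Lemma gstar_tup3 (X : finType) (x y z : X) : gstar (tup3 x y z) = gstar3 x y z.
Proof. by rewrite /gstar; case: (tup3E x y z) => -> -> ->. Qed.

Lemma injectiveb_tup3 (X : finType) (x y z : X) :
  injectiveb (tup3 x y z) = uniq [:: x; y; z].
Proof.
rewrite /injectiveb /dinjectiveb /image_mem.
pose h n := match n with 0 => x | 1 => y | _ => z end.
rewrite (eq_map (_ : tup3 x y z =1 h \o val)); last by move=> i; rewrite ffunE.
by rewrite map_comp (val_enum_ord 3).
Qed.

Lemma gstar_interpolation (X : finType) (F : forall n, op X n -> Prop) :
  2 < #|X| ->
  (F 3 (@gstar X) \/
   (forall a1 a2 a3 : X, a1 != a2 -> a1 != a3 -> a2 != a3 ->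
      exists g : op X 3, F 3 g /\ g (tup3 a1 a2 a3) = a1 /\
        (forall a : {ffun 'I_3 -> X}, ~~ injectiveb a -> g a = gstar a))) ->
  forall a0 : {ffun 'I_3 -> X}, exists2 m : op X 3, F 3 m &
    forall a, a = a0 \/ ~~ injectiveb a -> m a = gstar a.
Proof.
move=> X_gt2 [F_gstar a0 | F_weak]; first by exists (@gstar X).
have interp_inj (a0 : {ffun 'I_3 -> X}) : injectiveb a0 -> exists2 m : op X 3, F 3 m &
    forall a, a = a0 \/ ~~ injectiveb a -> m a = gstar a.
  rewrite (tup3_eta a0) injectiveb_tup3 /= !inE !negb_or => /and3P[/andP[a12 a13] a23 _].
  have [g [Fg [ga0 g_ninj]]] := F_weak _ _ _ a12 a13 a23.
  exists g => // a [->|]; last exact: g_ninj.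
  by rewrite ga0 gstar_tup3 /gstar3 (negbTE a23).
move=> a0; have [/interp_inj//|a0_ninj] := boolP (injectiveb a0).
have [x [y [z [_ [xy yz zx]]]]] := card_gt2P X_gt2.
have [|m Fm m_ninj] := interp_inj (tup3 x y z).
  by rewrite injectiveb_tup3 /= !inE negb_or xy yz eq_sym zx.
by exists m => // a [->|a_ninj]; apply: m_ninj; right.
Qed.

Lemma closed_gstar3 (X : finType) (k : nat) (F : forall n, op X n -> Prop)
    (C : {ffun kset X k -> X} -> Prop) :
  (forall n (f : op X n), F n f -> closed_under C f) ->
  (forall a0 : {ffun 'I_3 -> X}, exists2 m : op X 3, F 3 m &
    forall a, a = a0 \/ ~~ injectiveb a -> m a = gstar a) ->
  forall c1 c2 c3, C c1 -> C c2 -> C c3 -> forall Z0,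
  exists2 c, C c & forall Z, Z = Z0 \/ ~~ uniq [:: c1 Z; c2 Z; c3 Z] ->
    c Z = gstar3 (c1 Z) (c2 Z) (c3 Z).
Proof.
move=> F_closed interp c1 c2 c3 C1 C2 C3 Z0.
have [m Fm m_gstar] := interp (tup3 (c1 Z0) (c2 Z0) (c3 Z0)).
have tup3_app Z : [ffun i => tup3 c1 c2 c3 i Z] = tup3 (c1 Z) (c2 Z) (c3 Z).
  by apply/ffunP => -[[|[|[|//]]] i]; rewrite !ffunE.
exists [ffun Z => m [ffun i => tup3 c1 c2 c3 i Z]].
  by apply: (F_closed _ _ Fm (fun i => tup3 c1 c2 c3 i)) => -[[|[|[|//]]] i]; rewrite ffunE.
move=> Z Z_gstar; rewrite ffunE tup3_app m_gstar ?gstar_tup3 //.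
by rewrite injectiveb_tup3; case: Z_gstar => [->|]; [left | right].
Qed.

(** * Finite sets, permutations and k-sets *)

Lemma in_notin_eqF (T : finType) (S : {set T}) x y :
  x \in S -> y \notin S -> (x == y) = false.
Proof. by move=> xS; apply: contraNF => /eqP <-. Qed.

Lemma notin_in_eqF (T : finType) (S : {set T}) x y :
  x \notin S -> y \in S -> (x == y) = false.
Proof. by rewrite eq_sym => /[swap]; apply: in_notin_eqF. Qed.

Lemma card_setD1_gt (T : finType) (S : {set T}) x n :
  n.+1 < #|S| -> n < #|S :\ x|.
Proof. rewrite (cardsD1 x S); case: (x \in S) => /=; lia. Qed.

Lemma setI_setU1_setD (T : finType) (A B : {set T}) x :
  x \in A -> A :&: (x |: (B :\: A)) = [set x].
Proof.
move=> xA; apply/setP => y; rewrite !inE.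
by case: (eqVneq y x) => [->|_]; rewrite ?xA ?eqxx //=; case: (y \in A).
Qed.

Lemma setD_setU1_setD (T : finType) (A Y : {set T}) x :
  A \subset Y -> Y :\: (x |: (Y :\: A)) = A :\ x.
Proof.
move=> /subsetP AY; apply/setP => y; rewrite !inE.
case: (boolP (y \in A)) => [yA | _]; first by rewrite (AY _ yA) orbF andbT.
by case: (y \in Y); rewrite ?orbT ?andbF.
Qed.

Lemma card_setI_exchange (T : finType) (A : {set T}) b x :
  b \in A -> x \notin A -> #|A :&: (x |: (A :\ b))| = #|A|.-1.
Proof.
move=> bA xA; suff -> : A :&: (x |: (A :\ b)) = A :\ b by rewrite (cardsD1 b A) bA.
apply/setP => y; rewrite !inE.
by case: (eqVneq y x) => [->|_]; rewrite ?(negbTE xA) ?andbF //= andbCA andbb.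
Qed.

Lemma card_setI_exchange2 (T : finType) (A : {set T}) b b' x :
  b \in A -> b' \in A -> b != b' -> x \notin A ->
  #|(x |: (A :\ b)) :&: (x |: (A :\ b'))| = #|A|.-1.
Proof.
move=> bA b'A bb' xA.
suff -> : (x |: (A :\ b)) :&: (x |: (A :\ b')) = x |: (A :\ b :\ b').
  rewrite cardsU1 !inE (negbTE xA) !andbF (cardsD1 b A) bA.
  by rewrite (cardsD1 b' (A :\ b)) !inE eq_sym bb' b'A.
apply/setP => y; rewrite !inE.
by case: (y == x) => //=; case: (y \in A); rewrite ?andbT ?andbF // andbC.
Qed.

Lemma perm_of_eq_fibers (T : finType) (L : eqType) (f g : T -> L) :
  (forall l, #|[pred x | f x == l]| = #|[pred x | g x == l]|) ->
  exists p : {perm T}, forall x, g (p x) = f x.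
Proof.
move=> fibers.
pose fib (h : T -> L) l := enum [pred y | h y == l].
pose q x := nth x (fib g (f x)) (index x (fib f (f x))).
have q_idx x y : f x = f y -> index x (fib f (f y)) < size (fib g (f y)).
  by move=> <-; rewrite -cardE -fibers cardE index_mem mem_enum inE.
have gq x : g (q x) = f x.
  by have := mem_nth x (q_idx x x erefl); rewrite mem_enum inE => /eqP.
have q_inj : injective q.
  move=> x y qxy; have fxy : f x = f y by rewrite -gq qxy gq.
  move: qxy; rewrite /q fxy (set_nth_default y) ?q_idx // => /eqP.
  rewrite nth_uniq ?enum_uniq ?q_idx // => /eqP.
  by apply: (index_inj x); rewrite /fib mem_enum inE ?fxy.
by exists (perm q_inj) => x; rewrite permE.
Qed.

Lemma card_fiber_mem2 (T : finType) (A B : {set T}) (b1 b2 : bool) :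
  #|[pred x | (x \in A, x \in B) == (b1, b2)]| =
  if b1 then (if b2 then #|A :&: B| else #|A| - #|A :&: B|)
  else (if b2 then #|B| - #|A :&: B| else #|T| - (#|A| + #|B| - #|A :&: B|)).
Proof.
case: b1; case: b2.
- by apply: eq_card => x; rewrite !inE xpair_eqE !eqb_id.
- by rewrite -cardsD; apply: eq_card => x; rewrite !inE xpair_eqE eqb_id eqbF_neg andbC.
- by rewrite setIC -cardsD; apply: eq_card => x; rewrite !inE xpair_eqE eqb_id eqbF_neg.
- rewrite -cardsU -(cardsC (A :|: B)) addKn; apply: eq_card => x.
  by rewrite !inE xpair_eqE !eqbF_neg negb_or.
Qed.

Lemma card_kset (X : finType) (k : nat) (Z : kset X k) : #|val Z| = k.
Proof. exact: eqP (valP Z). Qed.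

Lemma mem_kset_perm (X : finType) (k : nat) (p : {perm X}) (Z : kset X k) y :
  (p y \in val (kset_perm p Z)) = (y \in val Z).
Proof. by rewrite mem_imset //; apply: perm_inj. Qed.

Lemma kset_permK (X : finType) (k : nat) (p : {perm X}) :
  cancel (@kset_perm X k p) (kset_perm p^-1).
Proof.
move=> Z; apply: val_inj; apply/setP => y.
by rewrite -[y in LHS](permK p) !mem_kset_perm.
Qed.

Lemma kset_perm_tperm (X : finType) (k : nat) (Z : kset X k) u v :
  (u \in val Z) = (v \in val Z) -> kset_perm (tperm u v) Z = Z.
Proof.
move=> uv; apply: val_inj; apply/setP => y.
by rewrite -[y in LHS](tpermK u v) mem_kset_perm; case: tpermP => // ->.
Qed.

Lemma kset_perm_pair (X : finType) (k : nat) (Z1 Z2 W1 W2 : kset X k) :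
  #|val Z1 :&: val Z2| = #|val W1 :&: val W2| ->
  exists p : {perm X}, kset_perm p Z1 = W1 /\ kset_perm p Z2 = W2.
Proof.
move=> eqI.
have [|p pE] := @perm_of_eq_fibers X _ (fun x => (x \in val Z1, x \in val Z2))
                                      (fun x => (x \in val W1, x \in val W2)).
  by case=> b1 b2; rewrite !card_fiber_mem2 eqI !card_kset.
exists p; split; apply: val_inj; apply/setP => y;
  by rewrite -[y](permKV p) mem_kset_perm; case: (pE (p^-1%g y)) => e1 e2; rewrite ?e1 ?e2.
Qed.

(* The junk value [Z] is returned when [x |: (Z :\ b)] is not a k-set. *)
Definition kset_exchange (X : finType) (k : nat) (Z : kset X k) (b x : X) :
  kset X k := insubd Z (x |: (val Z :\ b)).

Lemma val_kset_exchange (X : finType) (k : nat) (Z : kset X k) b x :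
  b \in val Z -> x \notin val Z -> val (kset_exchange Z b x) = x |: (val Z :\ b).
Proof.
move=> bZ xZ; rewrite insubdK // -topredE /= cardsU1 !inE (negbTE xZ) andbF.
by apply/eqP; have := card_kset Z; rewrite (cardsD1 b) bZ; apply: id.
Qed.

(* If #|Y| = 2k - 1 and x \in W \subset Y, then W and [kset_compl1 Y W x]
   are k-sets meeting exactly in x. *)
Definition kset_compl1 (X : finType) (k : nat) (Y : {set X}) (W : kset X k) (x : X) :
  kset X k := insubd W (x |: (Y :\: val W)).

Lemma val_kset_compl1 (X : finType) (k : nat) (Y : {set X}) (W : kset X k) x :
  #|Y| = k + k - 1 -> val W \subset Y -> x \in val W ->
  val (kset_compl1 Y W x) = x |: (Y :\: val W).
Proof.
move=> cardY WY xW; rewrite insubdK // -topredE /= cardsU1 !inE xW /=.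
have k_gt0 : 0 < k by rewrite -(card_kset W); apply/card_gt0P; exists x.
by rewrite cardsD (setIidPr WY) cardY card_kset; apply/eqP; lia.
Qed.

Lemma kset_compl1_sub (X : finType) (k : nat) (Y : {set X}) (W : kset X k) x :
  #|Y| = k + k - 1 -> val W \subset Y -> x \in val W -> val (kset_compl1 Y W x) \subset Y.
Proof.
move=> cardY WY xW; rewrite val_kset_compl1 // subUset sub1set subsetDl andbT.
exact: subsetP WY x xW.
Qed.

(** * Realizable pairs of values *)

Section Realizability.

Variables (X : finType) (k : nat) (C : {ffun kset X k -> X} -> Prop).
Hypothesis C_choice : forall c, C c -> choice_fun c.
Hypothesis C_sym : symmetric_family C.
(* g* applied pointwise, exact at a k-set Z0 where the values may be distinct. *)
Hypothesis C_gstar3 : forall c1 c2 c3, C c1 -> C c2 -> C c3 -> forall Z0,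
  exists2 c, C c & forall Z, Z = Z0 \/ ~~ uniq [:: c1 Z; c2 Z; c3 Z] ->
    c Z = gstar3 (c1 Z) (c2 Z) (c3 Z).
Variable c0 : {ffun kset X k -> X}.
Hypothesis C_c0 : C c0.

Definition realizable (Z1 Z2 : kset X k) (y1 y2 : X) :=
  exists2 c, C c & c Z1 = y1 /\ c Z2 = y2.

Lemma mem_of_realizable (t : {ffun kset X k -> X}) :
  (forall Z1 Z2, realizable Z1 Z2 (t Z1) (t Z2)) -> C t.
Proof.
move=> t_real.
(* Members of C agreeing with t except at Z1, Z2 and Z3 respectively combine
   under g* into one agreeing everywhere, g* returning the majority value. *)
have agree (S : {set kset X k}) Z1 Z2 :
    exists2 c, C c & {in Z1 |: (Z2 |: S), c =1 t}.
  have [n] := ubnP #|S|; elim: n S Z1 Z2 => // n IHn S Z1 Z2 ltSn.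
  have [->|[Z3 SZ3]] := set_0Vmem S.
    have [c Cc [e1 e2]] := t_real Z1 Z2.
    by exists c => // Z; rewrite setU0 !inE => /orP[]/eqP->.
  have ltS'n : #|S :\ Z3| < n by move: ltSn; rewrite (cardsD1 Z3) SZ3.
  have [c1 C1 e1] := IHn _ Z2 Z3 ltS'n.
  have [c2 C2 e2] := IHn _ Z1 Z3 ltS'n.
  have [c3 C3 e3] := IHn _ Z1 Z2 ltS'n.
  have [c Cc cE] := C_gstar3 C1 C2 C3 Z1.
  exists c => // Z ZS.
  suff /gstar3_majority[nuniq <-] : 1 < (c1 Z == t Z) + (c2 Z == t Z) + (c3 Z == t Z).
    by apply: cE; right.
  have [-> | nZ3] := eqVneq Z Z3.
    by rewrite e1 ?e2 ?eqxx // !inE eqxx ?orbT.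
  move: ZS; rewrite !inE => /or3P[/eqP->|/eqP->|ZS].
  - by rewrite e2 ?e3 ?eqxx; [lia | rewrite !inE eqxx ?orbT ..].
  - by rewrite e1 ?e3 ?eqxx; [lia | rewrite !inE eqxx ?orbT ..].
  - by rewrite e1 ?e2 ?e3 ?eqxx; [lia | rewrite !inE nZ3 ZS ?orbT ..].
have [Z0 _ | no_kset] := pickP (@predT (kset X k)).
  have [c Cc ct] := agree setT Z0 Z0.
  suff -> : t = c by [].
  by apply/ffunP => Z; rewrite ct // !inE ?orbT.
suff -> : t = c0 by [].
by apply/ffunP => Z; have := no_kset Z.
Qed.

Lemma realizable_sym (Z1 Z2 : kset X k) (y1 y2 : X) :
  realizable Z1 Z2 y1 y2 -> realizable Z2 Z1 y2 y1.
Proof. by case=> c Cc [<- <-]; exists c. Qed.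

(* g* maps (x', x, x) to x and (z, z1, z2) to z when z1 != z2. *)
Lemma realizable_glue (Z1 Z2 : kset X k) (x x' z z1 z2 : X) :
  realizable Z1 Z2 x' z -> realizable Z1 Z2 x z1 -> realizable Z1 Z2 x z2 ->
  z1 != z2 -> realizable Z1 Z2 x z.
Proof.
case=> c1 C1 [_ <-] [c2 C2 [e2 <-]] [c3 C3 [e3 <-]] z12.
have [c Cc cE] := C_gstar3 C1 C2 C3 Z2.
exists c => //; split; rewrite cE.
- by rewrite e2 e3; case: (gstar3_maj x (c1 Z1)).
- by right; rewrite e2 e3 /= !inE eqxx ?orbT ?andbF.
- by rewrite /gstar3 (negbTE z12).
- by left.
Qed.

Lemma realizable_glue_sym (Z1 Z2 : kset X k) (x x1 x2 z z' : X) :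
  realizable Z1 Z2 x z' -> realizable Z1 Z2 x1 z -> realizable Z1 Z2 x2 z ->
  x1 != x2 -> realizable Z1 Z2 x z.
Proof.
move=> /realizable_sym R /realizable_sym R1 /realizable_sym R2 x12.
exact/realizable_sym/(realizable_glue R R1 R2).
Qed.

Lemma realizable_perm (p : {perm X}) (Z1 Z2 : kset X k) (y1 y2 : X) :
  realizable Z1 Z2 y1 y2 ->
  realizable (kset_perm p Z1) (kset_perm p Z2) (p y1) (p y2).
Proof.
case=> c Cc [<- <-]; exists (perm_act p^-1 c); first exact: C_sym.
by rewrite !ffunE invgK !kset_permK.
Qed.

Lemma realizable_tperm (u v : X) (Z1 Z2 : kset X k) (y1 y2 : X) :
  (u \in val Z1) = (v \in val Z1) -> (u \in val Z2) = (v \in val Z2) ->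
  realizable Z1 Z2 y1 y2 -> realizable Z1 Z2 (tperm u v y1) (tperm u v y2).
Proof.
by move=> uv1 uv2 /(realizable_perm (tperm u v)); rewrite !kset_perm_tperm.
Qed.

Lemma realizable_move (Z1 Z2 : kset X k) (y1 y2 y1' y2' : X) :
  realizable Z1 Z2 y1 y2 ->
  (y1 \in val Z1) = (y1' \in val Z1) -> (y1 \in val Z2) = (y1' \in val Z2) ->
  (y2 \in val Z1) = (y2' \in val Z1) -> (y2 \in val Z2) = (y2' \in val Z2) ->
  (y1 == y2) = (y1' == y2') -> realizable Z1 Z2 y1' y2'.
Proof.
move=> R e11 e12 e21 e22 e.
have tperm_mem u v x (Z : kset X k) : (u \in val Z) = (v \in val Z) ->
    (tperm u v x \in val Z) = (x \in val Z).
  by move=> uv; case: tpermP => // ->.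
(* Move y1 to y1', then the image z of y2 to y2', by transpositions fixing Z1
   and Z2; the second one fixes y1' unless y1 = y2. *)
have := realizable_tperm e11 e12 R; rewrite tpermL.
set z := tperm y1 y1' y2 => {}R.
have [y12 | y12] := eqVneq y1 y2.
  by move: e R; rewrite /z -y12 tpermL eqxx => /esym/eqP <-.
have zZ1 : (z \in val Z1) = (y2' \in val Z1) by rewrite tperm_mem.
have zZ2 : (z \in val Z2) = (y2' \in val Z2) by rewrite tperm_mem.
have zy1' : z != y1'.
  by rewrite -[y1' in z != y1'](tpermL y1 y1') (inj_eq perm_inj) eq_sym.
have y2'y1' : y2' != y1' by rewrite eq_sym -e.
by have := realizable_tperm zZ1 zZ2 R; rewrite tpermL tpermD.
Qed.

Definition realizable_on (Z1 Z2 : kset X k) (b1 b2 e : bool) :=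
  forall y1 y2, y1 \in val Z1 -> y2 \in val Z2 ->
  (y1 \in val Z2) = b1 -> (y2 \in val Z1) = b2 -> (y1 == y2) = e ->
  realizable Z1 Z2 y1 y2.

Lemma realizable_on_transport (W1 W2 Z1 Z2 : kset X k) (x1 x2 : X) :
  realizable W1 W2 x1 x2 -> x1 \in val W1 -> x2 \in val W2 ->
  #|val W1 :&: val W2| = #|val Z1 :&: val Z2| ->
  realizable_on Z1 Z2 (x1 \in val W2) (x2 \in val W1) (x1 == x2).
Proof.
move=> R x1W1 x2W2 eqI y1 y2 y1Z1 y2Z2 e1 e2 e.
have [p [pW1 pW2]] := kset_perm_pair eqI.
have := realizable_perm p R; rewrite pW1 pW2 => /realizable_move; apply;
  by rewrite ?y1Z1 ?y2Z2 ?e1 ?e2 -?e -?pW1 -?pW2 ?mem_kset_perm ?(inj_eq perm_inj).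
Qed.

Lemma realizable_on_choice c (W1 W2 Z1 Z2 : kset X k) : C c ->
  #|val W1 :&: val W2| = #|val Z1 :&: val Z2| ->
  realizable_on Z1 Z2 (c W1 \in val W2) (c W2 \in val W1) (c W1 == c W2).
Proof.
by move=> Cc eqI; apply: realizable_on_transport eqI; [exists c | apply: C_choice ..].
Qed.

Lemma realizable_diag (Z : kset X k) y : y \in val Z -> realizable Z Z y y.
Proof.
move=> yZ; have := @realizable_on_choice c0 Z Z Z Z C_c0 erefl.
by rewrite C_choice // eqxx => /(_ y y yZ yZ yZ yZ (eqxx y)).
Qed.

Lemma realizable_on_from (Z1 Z2 : kset X k) y1 : y1 \in val Z1 ->
  exists2 y2, y2 \in val Z2 &
    realizable_on Z1 Z2 (y1 \in val Z2) (y2 \in val Z1) (y1 == y2).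
Proof.
move=> /realizable_diag[c Cc [cZ1 _]]; exists (c Z2); first exact: C_choice.
by rewrite -cZ1; apply: realizable_on_choice.
Qed.

(* The five types of pairs (y1, y2): p when the point lies in its own k-set
   only, c when it lies in both; cc1 when y1 = y2, cc2 when y1 != y2. *)
Local Notation realizable_pp Z1 Z2 := (realizable_on Z1 Z2 false false false).
Local Notation realizable_pc Z1 Z2 := (realizable_on Z1 Z2 false true false).
Local Notation realizable_cp Z1 Z2 := (realizable_on Z1 Z2 true false false).
Local Notation realizable_cc1 Z1 Z2 := (realizable_on Z1 Z2 true true true).
Local Notation realizable_cc2 Z1 Z2 := (realizable_on Z1 Z2 true true false).

Section Pair.

Variables Z1 Z2 : kset X k.
Local Notation A := (val Z1).
Local Notation B := (val Z2).
Local Notation Y := (A :|: B).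

Lemma realizable_ppP : realizable_pp Z1 Z2 <->
  {in A :\: B & B :\: A, forall u w, realizable Z1 Z2 u w}.
Proof.
split=> [t u w /setDP[uA uB] /setDP[wB wA] | t u w uA wB uB wA _].
  exact: t uA wB (negbTE uB) (negbTE wA) (in_notin_eqF uA wA).
by apply: t; rewrite inE ?uB ?wA ?uA ?wB.
Qed.

Lemma realizable_pcP : realizable_pc Z1 Z2 <->
  {in A :\: B & A :&: B, forall u p, realizable Z1 Z2 u p}.
Proof.
split=> [t u p /setDP[uA uB] /setIP[pA pB] | t u p uA pB uB pA _].
  exact: t uA pB (negbTE uB) pA (notin_in_eqF uB pB).
by apply: t; rewrite inE ?uB ?pA ?uA ?pB.
Qed.

Lemma realizable_cpP : realizable_cp Z1 Z2 <->
  {in A :&: B & B :\: A, forall p w, realizable Z1 Z2 p w}.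
Proof.
split=> [t p w /setIP[pA pB] /setDP[wB wA] | t p w pA wB pB wA _].
  exact: t pA wB pB (negbTE wA) (in_notin_eqF pA wA).
by apply: t; rewrite inE ?pB ?wA ?pA ?wB.
Qed.

Lemma realizable_cc1P : realizable_cc1 Z1 Z2 <->
  {in A :&: B, forall p, realizable Z1 Z2 p p}.
Proof.
split=> [t p /setIP[pA pB] | t p q pA qB _ _ /eqP pq].
  exact: (t p p pA pB pB pA (eqxx p)).
by rewrite -pq in qB *; apply: t; rewrite inE pA qB.
Qed.

Lemma realizable_cc2P : realizable_cc2 Z1 Z2 <->
  {in A :&: B &, forall p q, p != q -> realizable Z1 Z2 p q}.
Proof.
split=> [t p q /setIP[pA pB] /setIP[qA qB] /negbTE pq | t p q pA qB pB qA /negbT pq].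
  exact: t pA qB pB qA pq.
by apply: t; rewrite ?inE ?pA ?pB ?qA ?qB.
Qed.

Lemma realizable_cp_of_pc u p : u \in A :\: B -> p \in A :&: B ->
  realizable_pc Z1 Z2 -> realizable_cp Z1 Z2.
Proof.
move=> uD pI /realizable_pcP/(_ u p uD pI)/realizable_sym R.
move: uD pI => /setDP[uA uB] /setIP[pA pB].
have eqI : #|B :&: A| = #|A :&: B| by rewrite setIC.
have := realizable_on_transport R pB uA eqI.
by rewrite pA (negbTE uB) (in_notin_eqF pB uB).
Qed.

Lemma realizable_pc_of_cp p w : p \in A :&: B -> w \in B :\: A ->
  realizable_cp Z1 Z2 -> realizable_pc Z1 Z2.
Proof.
move=> pI wD /realizable_cpP/(_ p w pI wD)/realizable_sym R.
move: pI wD => /setIP[pA pB] /setDP[wB wA].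
have eqI : #|B :&: A| = #|A :&: B| by rewrite setIC.
have := realizable_on_transport R wB pA eqI.
by rewrite pB (negbTE wA) (notin_in_eqF wA pA).
Qed.

Lemma realizable_pp_of_pc_cp : realizable_pc Z1 Z2 -> realizable_cp Z1 Z2 ->
  1 < #|A :&: B| -> realizable_pp Z1 Z2.
Proof.
move=> /realizable_pcP tpc /realizable_cpP tcp /card_gt1P[p [q [pI qI pq]]].
apply/realizable_ppP => u w uD wD.
exact: realizable_glue (tcp p w pI wD) (tpc u p uD pI) (tpc u q uD qI) pq.
Qed.

Lemma realizable_cc1_of_pc_cp : realizable_pc Z1 Z2 -> realizable_cp Z1 Z2 ->
  1 < #|A :\: B| -> 0 < #|B :\: A| -> realizable_cc1 Z1 Z2.
Proof.
move=> /realizable_pcP tpc /realizable_cpP tcp /card_gt1P[u [u' [uD u'D uu']]].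
move=> /card_gt0P[w wD]; apply/realizable_cc1P => p pI.
exact: realizable_glue_sym (tcp p w pI wD) (tpc u p uD pI) (tpc u' p u'D pI) uu'.
Qed.

Lemma realizable_cc2_of_pc_cp : realizable_pc Z1 Z2 -> realizable_cp Z1 Z2 ->
  1 < #|A :\: B| -> 0 < #|B :\: A| -> realizable_cc2 Z1 Z2.
Proof.
move=> /realizable_pcP tpc /realizable_cpP tcp /card_gt1P[u [u' [uD u'D uu']]].
move=> /card_gt0P[w wD]; apply/realizable_cc2P => p q pI qI _.
exact: realizable_glue_sym (tcp p w pI wD) (tpc u q uD qI) (tpc u' q u'D qI) uu'.
Qed.

Lemma realizable_pc_of_pp_cc1 : realizable_pp Z1 Z2 -> realizable_cc1 Z1 Z2 ->
  1 < #|B :\: A| -> realizable_pc Z1 Z2.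
Proof.
move=> /realizable_ppP tpp /realizable_cc1P tcc1 /card_gt1P[w [w' [wD w'D ww']]].
apply/realizable_pcP => u p uD pI.
exact: realizable_glue (tcc1 p pI) (tpp u w uD wD) (tpp u w' uD w'D) ww'.
Qed.

Lemma realizable_pc_of_pp_cc2 : realizable_pp Z1 Z2 -> realizable_cc2 Z1 Z2 ->
  1 < #|B :\: A| -> 1 < #|A :&: B| -> realizable_pc Z1 Z2.
Proof.
move=> /realizable_ppP tpp /realizable_cc2P tcc2 /card_gt1P[w [w' [wD w'D ww']]] I2.
apply/realizable_pcP => u q uD qI.
have /card_gt0P[p /setD1P[pq pI]] := card_setD1_gt q I2.
exact: realizable_glue (tcc2 p q pI qI pq) (tpp u w uD wD) (tpp u w' uD w'D) ww'.
Qed.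

Lemma realizable_pc_of_pp_cc2' : realizable_pp Z1 Z2 -> realizable_cc2 Z1 Z2 ->
  0 < #|B :\: A| -> 2 < #|A :&: B| -> realizable_pc Z1 Z2.
Proof.
move=> /realizable_ppP tpp /realizable_cc2P tcc2 /card_gt0P[w wD] I3.
apply/realizable_pcP => u q uD qI.
have /card_gt1P[p [r [/setD1P[pq pI] /setD1P[rq rI] pr]]] := card_setD1_gt q I3.
exact: realizable_glue_sym (tpp u w uD wD) (tcc2 p q pI qI pq) (tcc2 r q rI qI rq) pr.
Qed.

Lemma realizable_cc1_of_cc2 : realizable_cc2 Z1 Z2 -> 2 < #|A :&: B| ->
  realizable_cc1 Z1 Z2.
Proof.
move=> /realizable_cc2P tcc2 I3; apply/realizable_cc1P => q qI.
have /card_gt1P[p [r [/setD1P[pq pI] /setD1P[rq rI] pr]]] := card_setD1_gt q I3.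
have qp : q != p by rewrite eq_sym.
have qr : q != r by rewrite eq_sym.
exact: realizable_glue (tcc2 p q pI qI pq) (tcc2 q p qI pI qp) (tcc2 q r qI rI qr) pr.
Qed.

Lemma realizable_cc2_of_pc_cc1 : realizable_pc Z1 Z2 -> realizable_cc1 Z1 Z2 ->
  0 < #|A :\: B| -> realizable_cc2 Z1 Z2.
Proof.
move=> /realizable_pcP tpc /realizable_cc1P tcc1 /card_gt0P[u uD].
apply/realizable_cc2P => p q pI qI pq.
have qu : q != u by apply: contraTneq uD => <-; rewrite inE; case/setIP: qI => _ ->.
exact: realizable_glue_sym (tcc1 p pI) (tcc1 q qI) (tpc u q uD qI) qu.
Qed.

Lemma realizable_pp_or_pc_cp u : u \in A :\: B ->
  realizable_pp Z1 Z2 \/ realizable_pc Z1 Z2 /\ realizable_cp Z1 Z2.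
Proof.
move=> uD; have /setDP[uA uB] := uD.
have [y yB] := realizable_on_from Z2 uA.
rewrite (negbTE uB) (notin_in_eqF uB yB).
case yA: (y \in A) => t; last by left.
by right; split=> //; apply: (realizable_cp_of_pc (p := y) uD _ t); rewrite inE yA yB.
Qed.

Lemma realizable_pc_cp_or_cc p : p \in A :&: B ->
  [\/ realizable_pc Z1 Z2 /\ realizable_cp Z1 Z2, realizable_cc1 Z1 Z2 |
      realizable_cc2 Z1 Z2 /\ 1 < #|A :&: B|].
Proof.
move=> pI; have /setIP[pA pB] := pI.
have [y yB] := realizable_on_from Z2 pA; rewrite pB.
case yA: (y \in A) => t; last first.
  rewrite (in_notin_eqF pA (negbT yA)) in t.
  have yD : y \in B :\: A by rewrite inE yA yB.
  by apply: Or31; split; first exact: realizable_pc_of_cp pI yD t.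
case: (eqVneq p y) t => [_ | py] t; first exact: Or32.
apply: Or33; split=> //; apply/card_gt1P; exists p, y.
by rewrite !inE pA pB yA yB.
Qed.

Lemma realizable_cc1_or_cc2 : #|A :&: B| = k.-1 -> 2 < k ->
  realizable_cc1 Z1 Z2 \/ realizable_cc2 Z1 Z2.
Proof.
move=> sI k_gt2; set a := c0 Z1; have aA : a \in A := C_choice C_c0 Z1.
have [x /setDP[xB xA]] : exists x, x \in B :\: A.
  by apply/card_gt0P; rewrite cardsD setIC sI card_kset; lia.
have /card_gt1P[b [b' [/setD1P[ba bA] /setD1P[b'a b'A] bb']]] : 1 < #|A :\ a|.
  by apply: card_setD1_gt; rewrite card_kset.
pose V β := kset_exchange Z1 β x.
have cc_or_x β : β \in A -> β != a ->
    [\/ realizable_cc1 Z1 Z2, realizable_cc2 Z1 Z2 | c0 (V β) = x].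
  move=> βA βa; have VE := val_kset_exchange βA xA.
  have [//|vx] := eqVneq (c0 (V β)) x; first by move=> ->; apply: Or33.
  have eqI : #|A :&: val (V β)| = #|A :&: B| by rewrite VE card_setI_exchange // sI card_kset.
  have := realizable_on_choice C_c0 eqI.
  have := C_choice C_c0 (V β); rewrite VE !inE (negbTE vx) orFb => /andP[_ ->].
  rewrite -/a (in_notin_eqF aA xA) aA andbT eq_sym βa.
  by case: (a == c0 (V β)) => t; [apply: Or31 | apply: Or32].
case: (cc_or_x b bA ba) => [||Eb]; [by left | by right |].
case: (cc_or_x b' b'A b'a) => [||Eb']; [by left | by right |].
left; have eqI : #|val (V b) :&: val (V b')| = #|A :&: B|.
  by rewrite !val_kset_exchange // card_setI_exchange2 // sI card_kset.
by have := realizable_on_choice C_c0 eqI; rewrite Eb Eb' !val_kset_exchange // !inE !eqxx.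
Qed.

Lemma realizable_pc_or_cc2 : #|A :&: B| = k.-1 -> 1 < k ->
  realizable_pc Z1 Z2 \/ realizable_cc2 Z1 Z2.
Proof.
move=> sI k_gt1; set a := c0 Z1; have aA : a \in A := C_choice C_c0 Z1.
have [x /setDP[xB xA]] : exists x, x \in B :\: A.
  by apply/card_gt0P; rewrite cardsD setIC sI card_kset; lia.
have /card_gt0P[p /setD1P[pa pA]] : 0 < #|A :\ a|.
  by apply: card_setD1_gt; rewrite card_kset.
have ap : a != p by rewrite eq_sym.
set Vp := kset_exchange Z1 p x; set Va := kset_exchange Z1 a x.
have VpE : val Vp = x |: (A :\ p) := val_kset_exchange pA xA.
have VaE : val Va = x |: (A :\ a) := val_kset_exchange aA xA.
have eqIp : #|A :&: val Vp| = #|A :&: B| by rewrite VpE card_setI_exchange // sI card_kset.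
have eqIa : #|A :&: val Va| = #|A :&: B| by rewrite VaE card_setI_exchange // sI card_kset.
have aVp : a \in val Vp by rewrite VpE !inE ap aA orbT.
have aVa : a \notin val Va by rewrite VaE !inE eqxx (in_notin_eqF aA xA).
have := C_choice C_c0 Vp; rewrite VpE !inE; set v := c0 Vp.
case: (eqVneq v x) => [vx _ | vx]; last rewrite orFb => /andP[vp vA].
  have eqIp' : #|val Vp :&: A| = #|A :&: B| by rewrite setIC.
  left; have := realizable_on_choice C_c0 eqIp'.
  by rewrite -/v -/a vx aVp (negbTE xA) (notin_in_eqF xA aA).
have [av | av] := eqVneq a v; last first.
  right; have := realizable_on_choice C_c0 eqIp.
  by rewrite -/v -/a aVp vA (negbTE av).
have rVa : c0 Va \in val Va := C_choice C_c0 Va; set r := c0 Va in rVa *.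
left; have [rp | rp] := eqVneq r p.
  have := realizable_on_choice C_c0 eqIa.
  by rewrite -/r -/a rp pA (negbTE aVa) (negbTE ap).
have eqI : #|val Vp :&: val Va| = #|A :&: B|.
  by rewrite VpE VaE card_setI_exchange2 // sI card_kset.
have := realizable_on_choice C_c0 eqI; rewrite -/r -/v -av (negbTE aVa).
have -> : r \in val Vp.
  by move: rVa; rewrite VpE VaE !inE => /orP[->|/andP[_ ->]]; rewrite ?rp ?orbT.
by rewrite (notin_in_eqF aVa rVa).
Qed.

Lemma card_setU_pair : #|A :&: B| = 1 -> #|Y| = k + k - 1.
Proof. by move=> sI; rewrite cardsU !card_kset sI. Qed.

Lemma realizable_pp_or_compl1 (W : kset X k) x :
  #|A :&: B| = 1 -> val W \subset Y -> x \in val W -> c0 W != x ->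
  realizable_pp Z1 Z2 \/ c0 (kset_compl1 Y W x) = x.
Proof.
move=> sI WY xW cWx; set V := kset_compl1 Y W x.
have [|cVx] := eqVneq (c0 V) x; [by right | left].
have VE : val V = x |: (Y :\: val W) by apply: val_kset_compl1; rewrite ?card_setU_pair.
have eqI : #|val W :&: val V| = #|A :&: B| by rewrite VE setI_setU1_setD // cards1 sI.
have cW := C_choice C_c0 W; have cV := C_choice C_c0 V.
have cVW : c0 V \notin val W by move: cV; rewrite VE !inE (negbTE cVx) orFb => /andP[].
have := realizable_on_choice C_c0 eqI.
by rewrite VE !inE (negbTE cWx) cW (negbTE cVW) (in_notin_eqF cW cVW) => t; exact: t.
Qed.

(* Starting from Z1, replace W by [kset_compl1 Y W x] for x = b, t, b' in turn;
   as c0 W != x, c0 must choose x at the new k-set unless pp holds. *)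
Lemma realizable_pp_or_compl1_chain b b' t :
  #|A :&: B| = 1 -> t \in B :\: A -> b \in A -> b' \in A -> c0 Z1 != b -> b' != b ->
  realizable_pp Z1 Z2 \/ exists2 U, c0 U = b' & val U = b' |: ((b |: (Y :\: A)) :\ t).
Proof.
move=> sI /setDP[tB tA] bA b'A ab b'b.
have cardY : #|Y| = k + k - 1 by rewrite card_setU_pair.
have AY : A \subset Y := subsetUl A B.
have tY : t \in Y by rewrite inE tB orbT.
set W := kset_compl1 Y Z1 b.
have WE : val W = b |: (Y :\: A) := val_kset_compl1 cardY AY bA.
have WY := kset_compl1_sub cardY AY bA.
have tW : t \in val W by rewrite WE in_setU1 in_setD tA tY orbT.
set V := kset_compl1 Y W t.
have VE : val V = t |: (A :\ b) by rewrite val_kset_compl1 // WE setD_setU1_setD.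
have VY := kset_compl1_sub cardY WY tW.
have b'V : b' \in val V by rewrite VE !inE b'b b'A orbT.
have bt : b != t by rewrite (in_notin_eqF bA tA).
have tb' : t != b' by rewrite eq_sym (in_notin_eqF b'A tA).
have [|cW] := realizable_pp_or_compl1 sI AY bA ab; first by left.
have := realizable_pp_or_compl1 sI WY tW; rewrite cW => /(_ bt)[|cV]; first by left.
have := realizable_pp_or_compl1 sI VY b'V; rewrite cV => /(_ tb')[|cU]; first by left.
right; exists (kset_compl1 Y V b') => //.
by rewrite val_kset_compl1 // (val_kset_compl1 cardY WY tW) setD_setU1_setD // WE.
Qed.

Lemma realizable_pp_of_card_setI1 : #|A :&: B| = 1 -> 2 < k -> realizable_pp Z1 Z2.
Proof.
move=> sI k_gt2; set a := c0 Z1; have aA : a \in A := C_choice C_c0 Z1.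
have /card_gt0P[t tD] : 0 < #|B :\: A| by rewrite cardsD setIC sI card_kset; lia.
have /card_gt1P[b [b' [/setD1P[ba bA] /setD1P[b'a b'A] bb']]] : 1 < #|A :\ a|.
  by apply: card_setD1_gt; rewrite card_kset.
have ab : a != b by rewrite eq_sym.
have ab' : a != b' by rewrite eq_sym.
have b'b : b' != b by rewrite eq_sym.
have [//|[U cU UE]] := realizable_pp_or_compl1_chain sI tD bA b'A ab b'b.
have [//|[U' cU' U'E]] := realizable_pp_or_compl1_chain sI tD b'A bA ab' bb'.
(* Both chains end at the k-set {b, b'} :|: (B :\: A :\ t). *)
suff UU' : U = U' by move: bb'; rewrite -cU' -UU' cU eqxx.
move: tD => /setDP[_ tA].
have bt : b != t by rewrite (in_notin_eqF bA tA).
have b't : b' != t by rewrite (in_notin_eqF b'A tA).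
apply: val_inj; rewrite UE U'E; apply/setP => y; rewrite !inE.
have [->|_] := eqVneq y b; first by rewrite bt /= orbT.
by have [->|_] := eqVneq y b'; first by rewrite b't /= ?orbT.
Qed.

Local Notation realizable_types := [/\ realizable_pp Z1 Z2, realizable_pc Z1 Z2,
  realizable_cp Z1 Z2, realizable_cc1 Z1 Z2 & realizable_cc2 Z1 Z2].

Lemma realizable_on_setI0 b1 b2 e : A :&: B = set0 -> b1 || b2 ->
  realizable_on Z1 Z2 b1 b2 e.
Proof.
move=> I0 b12 y1 y2 y1A y2B y1B y2A _.
suff : (y1 \in A :&: B) || (y2 \in A :&: B) by rewrite I0 !inE.
by rewrite !inE y1A y2B y1B y2A andbT.
Qed.

Lemma realizable_cc2_setI_le1 : #|A :&: B| <= 1 -> realizable_cc2 Z1 Z2.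
Proof.
move=> I1 p q pA qB pB qA /negbT pq; exfalso; move: I1; rewrite leqNgt.
by case/negP; apply/card_gt1P; exists p, q; rewrite !inE pA pB qA qB.
Qed.

Lemma realizable_types_setI0 : #|A :&: B| = 0 -> 0 < k -> realizable_types.
Proof.
move=> /cards0_eq I0 k_gt0.
have /card_gt0P[u uA] : 0 < #|A| by rewrite card_kset.
split; try by apply: realizable_on_setI0.
have [y yB] := realizable_on_from Z2 uA.
have disj x : (x \in A) && (x \in B) = false by rewrite -in_setI I0 inE.
have yA : y \in A = false by move: (disj y); rewrite yB andbT.
have uB : u \in B = false by move: (disj u); rewrite uA.
by rewrite uB yA (in_notin_eqF uA (negbT yA)).
Qed.

Lemma realizable_types_setI1 : #|A :&: B| = 1 -> 2 < k -> realizable_types.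
Proof.
move=> sI k_gt2; have tpp := realizable_pp_of_card_setI1 sI k_gt2.
have dA : 1 < #|A :\: B| by rewrite cardsD sI card_kset; lia.
have dB : 1 < #|B :\: A| by rewrite cardsD setIC sI card_kset; lia.
have tcc2 : realizable_cc2 Z1 Z2 by apply: realizable_cc2_setI_le1; rewrite sI.
have /card_gt0P[p pI] : 0 < #|A :&: B| by rewrite sI.
have /card_gt0P[u uD] := ltnW dA.
case: (realizable_pc_cp_or_cc pI) => [[tpc tcp] | tcc1 | [_]]; last by rewrite sI.
  by split=> //; apply: realizable_cc1_of_pc_cp => //; apply: ltnW.
have tpc := realizable_pc_of_pp_cc1 tpp tcc1 dB.
by split=> //; apply: realizable_cp_of_pc uD pI tpc.
Qed.

Lemma realizable_types_setI_pred : #|A :&: B| = k.-1 -> 3 < k -> realizable_types.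
Proof.
move=> sI k_gt3.
have dA : 0 < #|A :\: B| by rewrite cardsD sI card_kset; lia.
have dB : 0 < #|B :\: A| by rewrite cardsD setIC sI card_kset; lia.
have I3 : 2 < #|A :&: B| by rewrite sI; lia.
have tcc1 : realizable_cc1 Z1 Z2.
  have [//|tcc2] := realizable_cc1_or_cc2 sI (ltnW k_gt3).
  exact: realizable_cc1_of_cc2 tcc2 I3.
have tcc2 : realizable_cc2 Z1 Z2.
  have [tpc|//] := realizable_pc_or_cc2 sI (ltnW (ltnW k_gt3)).
  exact: realizable_cc2_of_pc_cc1 tpc tcc1 dA.
have /card_gt0P[p pI] := ltnW (ltnW I3).
have /card_gt0P[u uD] := dA.
case: (realizable_pp_or_pc_cp uD) => [tpp | [tpc tcp]].
  have tpc := realizable_pc_of_pp_cc2' tpp tcc2 dB I3.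
  by split=> //; apply: realizable_cp_of_pc uD pI tpc.
by split=> //; apply: realizable_pp_of_pc_cp => //; apply: ltnW.
Qed.

Lemma realizable_types_mid : 1 < #|A :&: B| -> 1 < #|A :\: B| -> 1 < #|B :\: A| ->
  realizable_types.
Proof.
move=> I2 dA dB.
have of_pc_cp : realizable_pc Z1 Z2 -> realizable_cp Z1 Z2 -> realizable_types.
  move=> tpc tcp; split=> //.
  - exact: realizable_pp_of_pc_cp.
  - exact: realizable_cc1_of_pc_cp (ltnW dB).
  - exact: realizable_cc2_of_pc_cp (ltnW dB).
have /card_gt0P[p pI] := ltnW I2.
have /card_gt0P[u uD] := ltnW dA.
case: (realizable_pp_or_pc_cp uD) => [tpp | [tpc tcp]]; last exact: of_pc_cp.
have tpc : realizable_pc Z1 Z2.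
  case: (realizable_pc_cp_or_cc pI) => [[//] | tcc1 | [tcc2 _]].
    exact: realizable_pc_of_pp_cc1.
  exact: realizable_pc_of_pp_cc2.
exact/of_pc_cp/(realizable_cp_of_pc uD pI tpc).
Qed.

Lemma realizable_distinct y1 y2 : Z1 != Z2 -> 3 < k ->
  y1 \in A -> y2 \in B -> realizable Z1 Z2 y1 y2.
Proof.
move=> Z12 k_gt3 y1A y2B.
have sk : #|A :&: B| < k.
  rewrite ltnNge; apply: contra Z12 => sk; apply/eqP/val_inj.
  have IA : A :&: B = A by apply/eqP; rewrite eqEcard subsetIl card_kset.
  have IB : A :&: B = B by apply/eqP; rewrite eqEcard subsetIr card_kset.
  by rewrite -IA IB.
have types : realizable_types.
  have dA : #|A :\: B| = k - #|A :&: B| by rewrite cardsD card_kset.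
  have dB : #|B :\: A| = k - #|A :&: B| by rewrite cardsD setIC card_kset.
  have [s0 | s_gt0] := posnP #|A :&: B|; first by apply: realizable_types_setI0; lia.
  have [s1 | s_neq1] := eqVneq #|A :&: B| 1; first by apply: realizable_types_setI1; lia.
  have [sk1 | s_neqk1] := eqVneq #|A :&: B| k.-1; first exact: realizable_types_setI_pred.
  by apply: realizable_types_mid; rewrite ?dA ?dB; lia.
case: types => tpp tpc tcp tcc1 tcc2.
suff : realizable_on Z1 Z2 (y1 \in B) (y2 \in A) (y1 == y2) by apply.
have [e | _] := eqVneq y1 y2; first by rewrite -e in y2B *; rewrite y1A y2B.
by case: (y1 \in B); case: (y2 \in A).
Qed.

End Pair.

End Realizability.

Theorem claim12p2 (X : finType) (k : nat) (F : forall n, op X n -> Prop)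
  (C : {ffun kset X k -> X} -> Prop) :
  5 <= k -> 7 <= #|X| - k ->
  is_clone F ->
  (F 3 (@gstar X) \/
   (forall a1 a2 a3 : X, a1 != a2 -> a1 != a3 -> a2 != a3 ->
      exists g : op X 3, F 3 g /\ g (tup3 a1 a2 a3) = a1 /\
        (forall a : {ffun 'I_3 -> X}, ~~ injectiveb a -> g a = gstar a))) ->
  (exists c, C c) ->
  (forall c, C c -> choice_fun c) ->
  symmetric_family C ->
  (forall n (f : op X n), F n f -> closed_under C f) ->
  full C.
Proof.
move=> k_ge5 X_gt _ F_gstar [c0 C_c0] C_choice C_sym F_closed t t_choice.
have X_gt2 : 2 < #|X| by lia.
have C_gstar3 := closed_gstar3 F_closed (gstar_interpolation X_gt2 F_gstar).
apply: (mem_of_realizable C_gstar3 C_c0) => Z1 Z2.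
have [<- | Z12] := eqVneq Z1 Z2.
  exact: (realizable_diag C_choice C_sym C_c0 (t_choice Z1)).
have k_gt3 : 3 < k by lia.
exact: (realizable_distinct C_choice C_sym C_gstar3 C_c0 Z12 k_gt3
  (t_choice Z1) (t_choice Z2)).
Qed.
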